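(* Let $\pi$ be any policy. Then for every state $s\in\mathcal S$, $$g^\pi(s)\;\le\;V^{\pi}(s)-V^{\pi^*}(s)\;\le\;(1-\gamma)^{-1}\max_{s'\in\mathcal S} g^{\pi}(s').$$
   Context: An infinite-horizon discounted MDP is given by a finite state space $\mathcal S$, a finite action space $\mathcal A$, transition probabilities $\mathcal P(s'\mid s,a)$, a cost $c:\mathcal S\times\mathcal A\to\mathbb R$ and a discount factor $\gamma\in[0,1)$. $\Delta_{|\mathcal A|}$ denotes the probability simplex over $\mathcal A$. A (feasible) policy $\pi$ assigns to each $s$ a distribution $\pi(\cdot\mid s)\in\Delta_{|\mathcal A|}$. For each state $s$, $p\mapsto h^{p}(s)$ is a closed convex function on $\Delta_{|\mathcal A|}$ (the regularizer). The value functions are $V^\pi(s)=\mathbb E\big[\sum_{t\ge0}\gamma^t\,(c(s_t,a_t)+h^{\pi(\cdot\mid s_t)}(s_t))\mid s_0=s,\ a_t\sim\pi(\cdot\mid s_t),\ s_{t+1}\sim\mathcal P(\cdot\mid s_t,a_t)\big]$ and $Q^\pi(s,a)$ is defined by the same expression with the additional condition $a_0=a$. $\pi^*$ denotes an optimal policy, i.e. $V^{\pi^*}(s)\le V^\pi(s)$ for all policies $\pi$ and all $s$ (assumed to exist). For $p\in\Delta_{|\mathcal A|}$ the advantage function is $\psi^\pi(s,p):=\langle Q^\pi(s,\cdot),p\rangle-V^\pi(s)+h^{p}(s)-h^{\pi(\cdot\mid s)}(s)$, and the advantage gap function is $g^\pi(s):=\max_{p\in\Delta_{|\mathcal A|}}\{-\psi^\pi(s,p)\}$.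 *)

From HB Require Import structures.
From mathcomp Require Import all_boot all_order all_algebra.
From mathcomp Require Import all_classical all_reals all_analysis.
Set Implicit Arguments. Unset Strict Implicit. Unset Printing Implicit Defensive.
Import Order.TTheory GRing.Theory Num.Theory.
Local Open Scope ring_scope.
Local Open Scope classical_set_scope.

Section MDP.
Variables (R : realType) (S A : finType).

Definition in_simplex (p : A -> R) : Prop :=
  (forall a, 0 <= p a) /\ \sum_(a : A) p a = 1.

Definition feasible_policy (pi : S -> A -> R) : Prop :=
  forall s, in_simplex (pi s).

(* transition kernel P s a s' = P(s' | s, a) *)
Definition transition_kernel (P : S -> A -> S -> R) : Prop :=
  forall s a, (forall s', 0 <= P s a s') /\ \sum_(s' : S) P s a s' = 1.

(* p |-> h s p is a closed (lower semicontinuous) convex function on the simplex *)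
Definition closed_convex_on_simplex (f : (A -> R) -> R) : Prop :=
  (forall p q (t : R), in_simplex p -> in_simplex q -> 0 <= t <= 1 ->
     f (fun a => t * p a + (1 - t) * q a) <= t * f p + (1 - t) * f q) /\
  (forall p e, in_simplex p -> 0 < e -> exists2 d : R, 0 < d &
     forall q, in_simplex q -> (forall a, `|q a - p a| < d) -> f p - e < f q).

Variables (P : S -> A -> S -> R) (c : S -> A -> R) (h : S -> (A -> R) -> R)
  (gamma : R).

Definition stage_cost (pi : S -> A -> R) (s : S) : R :=
  \sum_(a : A) pi s a * c s a + h s (pi s).

(* t-step state distribution of the chain under pi started at s:
   dist pi t s s' = Pr(s_t = s' | s_0 = s) *)
Fixpoint state_dist (pi : S -> A -> R) (t : nat) (s s' : S) : R :=
  match t with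
  | 0 => (s == s')%:R
  | t'.+1 => \sum_(u : S) state_dist pi t' s u *
                 (\sum_(a : A) pi u a * P u a s')
  end.

(* V^pi(s) = E[ sum_t gamma^t (c(s_t,a_t) + h^{pi(.|s_t)}(s_t)) | s_0 = s ] *)
Definition Vfun (pi : S -> A -> R) (s : S) : R :=
  limn (fun N => \sum_(0 <= t < N) (gamma ^+ t *
     \sum_(s' : S) state_dist pi t s s' * stage_cost pi s')).

(* Q^pi(s,a): same expectation with additionally a_0 = a *)
Definition Qfun (pi : S -> A -> R) (s : S) (a : A) : R :=
  limn (fun N => \sum_(0 <= t < N)
    (match t with
     | 0 => c s a + h s (pi s)
     | t'.+1 => gamma ^+ t *
         \sum_(s1 : S) P s a s1 *
            \sum_(s' : S) state_dist pi t' s1 s' * stage_cost pi s'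
     end)).

Definition advantage (pi : S -> A -> R) (s : S) (p : A -> R) : R :=
  \sum_(a : A) Qfun pi s a * p a - Vfun pi s + h s p - h s (pi s).

(* advantage gap function g^pi(s) = max_{p in simplex} - psi^pi(s,p)
   (the max is attained since h s is closed convex on the compact simplex) *)
Definition adv_gap (pi : S -> A -> R) (s : S) : R :=
  sup [set - advantage pi s p | p in in_simplex].

End MDP.

(* Write T_p v (s) = <c(s,.), p> + h^p(s) + gamma E_{a~p, s'~P(.|s,a)} v(s') for
   the one-step lookahead with action distribution p at s ([lookahead]).  The
   value of a policy is a fixed point, V^pi(s) = T_{pi(s)} V^pi (s), and the
   Bellman equation for Q^pi turns the advantage into
   psi^pi(s,p) = T_p V^pi (s) - V^pi(s).
   Lower bound: an optimal value satisfies V*(s) <= T_p V* (s) for every p,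
   since otherwise playing p at s and pi* elsewhere would beat pi*; monotonicity
   of T_p and V* <= V^pi then give -psi^pi(s,p) <= V^pi(s) - V*(s).
   Upper bound: D = V^pi - V* satisfies D(s) = -psi^pi(s,pi*(s)) + gamma P_{pi*} D (s)
   <= max g^pi + gamma max D, and evaluating at a maximiser of D gives the
   claim.  That g^pi is finite uses that a closed convex function on the
   simplex is bounded below. *)

From HB Require Import structures.
From mathcomp Require Import all_boot all_order all_algebra.
From mathcomp Require Import all_classical all_reals all_analysis.
From mathcomp Require Import ring lra.
Import Order.TTheory GRing.Theory Num.Theory.
Import numFieldNormedType.Exports.
Set Implicit Arguments. Unset Strict Implicit. Unset Printing Implicit Defensive.
Local Open Scope ring_scope.
Local Open Scope classical_set_scope.

Section WeightedSums.
Variables (R : realType) (I : finType).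

Lemma sum_delta_mull (i : I) (F : I -> R) : \sum_j (i == j)%:R * F j = F i.
Proof.
rewrite (bigD1 i) //= eqxx mul1r big1 ?addr0 // => j /negbTE.
by rewrite eq_sym => ->; rewrite mul0r.
Qed.

Lemma sum_delta_mulr (i : I) (F : I -> R) : \sum_j F j * (j == i)%:R = F i.
Proof. by rewrite -[RHS](sum_delta_mull i); apply: eq_bigr => j _; rewrite mulrC eq_sym. Qed.

Lemma ler_term_sum (F : I -> R) i : (forall j, 0 <= F j) -> F i <= \sum_j F j.
Proof. by move=> F0; rewrite (bigD1 i) //= lerDl sumr_ge0. Qed.

Lemma convex_comb_le (w F : I -> R) m :
  (forall i, 0 <= w i) -> \sum_i w i = 1 -> (forall i, F i <= m) ->
  \sum_i w i * F i <= m.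
Proof.
move=> w0 w1 Fm; apply: (@le_trans _ _ (\sum_i w i * m)).
  by apply: ler_sum => i _; apply: ler_wpM2l.
by rewrite -mulr_suml w1 mul1r.
Qed.

Lemma norm_convex_comb_le (w x : I -> R) :
  (forall i, 0 <= w i) -> \sum_i w i = 1 ->
  `|\sum_i w i * x i| <= \sum_i `|x i|.
Proof.
move=> w0 w1; apply: (le_trans (ler_norm_sum _ _ _)); apply: ler_sum => i _.
rewrite normrM (ger0_norm (w0 i)) -[leRHS]mul1r ler_wpM2r //.
by rewrite -w1 ler_term_sum.
Qed.

Lemma has_ubound_range_fin (f : I -> R) : has_ubound (range f).
Proof.
exists (\sum_i `|f i|) => _ [i _ <-].
exact: le_trans (ler_norm _) (ler_term_sum _ _).
Qed.

(* Evaluate the hypothesis at a maximiser of D. *)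
Lemma discounted_max_principle (K : I -> I -> R) (g B : R) (D e : I -> R) :
  (forall i j, 0 <= K i j) -> (forall i, \sum_j K i j = 1) ->
  0 <= g -> g < 1 ->
  (forall i, D i <= g * \sum_j K i j * D j + e i) -> (forall i, e i <= B) ->
  forall i, D i <= (1 - g)^-1 * B.
Proof.
move=> K0 K1 g0 g1 DKe eB i.
case: (@arg_maxP _ _ _ i predT D isT) => i0 _ Dmax.
apply: le_trans (Dmax i isT) _.
have KD : \sum_j K i0 j * D j <= D i0 by apply: convex_comb_le => // j; exact: Dmax.
have : D i0 <= g * D i0 + B.
  by apply: le_trans (DKe i0) _; apply: lerD (eB i0); exact: ler_wpM2l.
by rewrite ler_pdivlMl ?subr_gt0 //; lra.
Qed.

End WeightedSums.

Lemma cvgn_series_geometric_bound (R : realType) (a : R ^nat) (B g : R) :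
  0 <= g -> g < 1 -> (forall t, `|a t| <= B * g ^+ t) -> cvgn (series a).
Proof.
move=> g0 g1 aB.
have B0 : 0 <= B by have := aB 0%N; rewrite expr0 mulr1; apply: le_trans.
apply: normed_cvg; apply: (@series_le_cvg R (fun n => `|a n|) (geometric B g)) => //.
- by move=> n; rewrite /geometric /= mulr_ge0 // exprn_ge0.
- by apply: is_cvg_geometric_series; rewrite ger0_norm.
Qed.

(* Mixing p with weight t towards a point b where f is lower semicontinuous
   keeps the mixture close to b, so convexity bounds f p from below. *)
Lemma closed_convex_on_simplex_lbound (R : realType) (A : finType)
    (f : (A -> R) -> R) (b : A -> R) :
  closed_convex_on_simplex f -> in_simplex b ->
  exists K, forall p, in_simplex p -> K <= f p.
Proof.
move=> [f_conv f_lsc] [b0 b1].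
have [d d0 f_near] := f_lsc b 1 (conj b0 b1) ltr01.
pose t := Num.min (d / 2) 1.
have t0 : 0 < t by rewrite lt_min divr_gt0 // ltr01.
have t1 : t <= 1 by rewrite ge_min lexx orbT.
have td : t < d by rewrite gt_min; apply/orP; left; lra.
exists (f b - t^-1) => p [p0 p1].
pose q a := t * p a + (1 - t) * b a.
have q_simplex : in_simplex q.
  split; last by rewrite big_split -!mulr_sumr p1 b1 /=; ring.
  by move=> a; rewrite addr_ge0 // mulr_ge0 // ?subr_ge0 // ltW.
have q_near a : `|q a - b a| < d.
  have -> : q a - b a = t * (p a - b a) by rewrite /q; ring.
  have pa1 : p a <= 1 by rewrite -p1 ler_term_sum.
  have ba1 : b a <= 1 by rewrite -b1 ler_term_sum.
  have pa0 := p0 a; have ba0 := b0 a.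
  have pb1 : `|p a - b a| <= 1 by rewrite ler_norml; apply/andP; split; lra.
  rewrite normrM gtr0_norm //; apply: le_lt_trans td.
  by rewrite -[leRHS]mulr1 ler_wpM2l // ltW.
have fq_lb := f_near q q_simplex q_near.
have fq_ub : f q <= t * f p + (1 - t) * f b.
  by apply: f_conv => //; rewrite (ltW t0) t1.
rewrite -(ler_pM2l t0) mulrBr mulfV ?gt_eqF //; lra.
Qed.

Section MDP.
Variables (R : realType) (S A : finType).
Variables (P : S -> A -> S -> R) (c : S -> A -> R) (h : S -> (A -> R) -> R)
  (gamma : R).
Hypothesis HP : transition_kernel P.
Hypothesis gamma_ge0 : 0 <= gamma.
Hypothesis gamma_lt1 : gamma < 1.

Definition policy_trans (p : A -> R) (s s' : S) : R := \sum_a p a * P s a s'.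

Definition lookahead (p : A -> R) (v : S -> R) (s : S) : R :=
  \sum_a p a * c s a + h s p + gamma * \sum_s' policy_trans p s s' * v s'.

Lemma policy_trans_ge0 p s s' : in_simplex p -> 0 <= policy_trans p s s'.
Proof.
by move=> [p0 _]; apply: sumr_ge0 => a _; rewrite mulr_ge0 // (HP s a).1.
Qed.

Lemma policy_trans_sum1 p s : in_simplex p -> \sum_s' policy_trans p s s' = 1.
Proof.
move=> [_ p1]; rewrite /policy_trans exchange_big /= -p1; apply: eq_bigr => a _.
by rewrite -mulr_sumr (HP s a).2 mulr1.
Qed.

Lemma lookaheadB p v w s : lookahead p v s - lookahead p w s =
  gamma * \sum_s' policy_trans p s s' * (v s' - w s').
Proof.
rewrite /lookahead; under [in RHS]eq_bigr do rewrite mulrBr.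
by rewrite sumrB; ring.
Qed.

Lemma ler_lookahead p v w s : in_simplex p -> (forall s', v s' <= w s') ->
  lookahead p v s <= lookahead p w s.
Proof.
move=> p_simplex vw; rewrite -subr_ge0 lookaheadB mulr_ge0 // sumr_ge0 // => s' _.
by rewrite mulr_ge0 ?policy_trans_ge0 ?subr_ge0.
Qed.

Lemma cvg_trans_avg (k : S -> R) (v : nat -> S -> R) (w : S -> R) :
  (forall s', v N s' @[N --> \oo] --> w s') ->
  \sum_s' k s' * v N s' @[N --> \oo] --> \sum_s' k s' * w s'.
Proof.
move=> vw; apply: cvg_big => [|s' _]; first exact: add_continuous.
by apply: cvgM; [exact: cvg_cst | exact: vw].
Qed.

Section FixedPolicy.
Variable pi : S -> A -> R.
Hypothesis pi_feasible : feasible_policy pi.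

Lemma state_dist_ge0 t s s' : 0 <= state_dist P pi t s s'.
Proof.
elim: t s' => [|t IH] s' /=; first by case: (s == s').
by apply: sumr_ge0 => u _; rewrite mulr_ge0 // (policy_trans_ge0 _ _ (pi_feasible u)).
Qed.

Lemma state_dist_sum1 t s : \sum_s' state_dist P pi t s s' = 1.
Proof.
elim: t => [|t IH] /=.
  by rewrite -[RHS](sum_delta_mull s (fun=> 1)); apply: eq_bigr => s' _; rewrite mulr1.
rewrite exchange_big /= -IH; apply: eq_bigr => u _.
by rewrite -mulr_sumr (policy_trans_sum1 _ (pi_feasible u)) mulr1.
Qed.

(* Backward Chapman-Kolmogorov: [state_dist] is defined by a forward step. *)
Lemma state_distSl t s s' : state_dist P pi t.+1 s s' =
  \sum_s1 policy_trans (pi s) s s1 * state_dist P pi t s1 s'.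
Proof.
elim: t s' => [|t IH] s'; first by rewrite /= sum_delta_mull sum_delta_mulr.
have -> : state_dist P pi t.+2 s s' =
    \sum_u state_dist P pi t.+1 s u * policy_trans (pi u) u s' by [].
under eq_bigr do rewrite IH mulr_suml.
rewrite exchange_big /=; apply: eq_bigr => s1 _.
by rewrite mulr_sumr; apply: eq_bigr => u _; rewrite mulrA.
Qed.

Definition expected_cost (t : nat) (s : S) : R :=
  \sum_s' state_dist P pi t s s' * stage_cost c h pi s'.

Lemma expected_costS t s : expected_cost t.+1 s =
  \sum_s1 policy_trans (pi s) s s1 * expected_cost t s1.
Proof.
rewrite /expected_cost; under eq_bigr do rewrite state_distSl mulr_suml.
rewrite exchange_big /=; apply: eq_bigr => s1 _.
by rewrite mulr_sumr; apply: eq_bigr => u _; rewrite mulrA.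
Qed.

Lemma norm_expected_cost_le t s :
  `|expected_cost t s| <= \sum_s' `|stage_cost c h pi s'|.
Proof.
apply: norm_convex_comb_le; [exact: state_dist_ge0 | exact: state_dist_sum1].
Qed.

Definition discounted_cost (N : nat) (s : S) : R :=
  \sum_(0 <= t < N) gamma ^+ t * expected_cost t s.

Lemma discounted_cost_cvg s :
  discounted_cost N s @[N --> \oo] --> Vfun P c h gamma pi s.
Proof.
apply: (@cvgn_series_geometric_bound _ _ (\sum_s' `|stage_cost c h pi s'|) gamma) => // t.
rewrite normrM ger0_norm ?exprn_ge0 // mulrC.
by rewrite ler_wpM2r ?exprn_ge0 ?norm_expected_cost_le.
Qed.

Lemma discounted_costS N s :
  discounted_cost N.+1 s = lookahead (pi s) (discounted_cost N) s.
Proof.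
rewrite /discounted_cost big_nat_recl // expr0 mul1r /expected_cost sum_delta_mull.
rewrite /lookahead; congr (_ + _).
rewrite mulr_sumr; under [RHS]eq_bigr do rewrite !big_distrr /=.
rewrite [RHS]exchange_big /=; apply: eq_bigr => t _.
rewrite -/(expected_cost t.+1 s) expected_costS exprS !mulr_sumr.
by apply: eq_bigr => s1 _; rewrite /expected_cost; ring.
Qed.

Lemma Vfun_bellman s : Vfun P c h gamma pi s = lookahead (pi s) (Vfun P c h gamma pi) s.
Proof.
have shifted_cvg : discounted_cost N.+1 s @[N --> \oo] --> Vfun P c h gamma pi s.
  by rewrite (cvg_shiftS (discounted_cost^~ s)); exact: discounted_cost_cvg.
have lookahead_cvg : discounted_cost N.+1 s @[N --> \oo] -->
    lookahead (pi s) (Vfun P c h gamma pi) s.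
  under eq_cvg do rewrite discounted_costS.
  apply: cvgD; first exact: cvg_cst.
  apply: cvgM; first exact: cvg_cst.
  by apply: cvg_trans_avg => s1; exact: discounted_cost_cvg.
exact: cvg_unique shifted_cvg lookahead_cvg.
Qed.

Lemma Qfun_bellman s a : Qfun P c h gamma pi s a =
  c s a + h s (pi s) + gamma * \sum_s1 P s a s1 * Vfun P c h gamma pi s1.
Proof.
rewrite /Qfun; set q := (X in limn X).
have qS N : q N.+1 = c s a + h s (pi s) +
    gamma * \sum_s1 P s a s1 * discounted_cost N s1.
  rewrite /q big_nat_recl //; congr (_ + _).
  rewrite mulr_sumr; under [RHS]eq_bigr do rewrite !big_distrr /=.
  rewrite [RHS]exchange_big /=; apply: eq_bigr => t _.
  by rewrite exprS !mulr_sumr; apply: eq_bigr => s1 _; rewrite /expected_cost; ring.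
apply: cvg_lim => //; rewrite -(cvg_shiftS q) /=.
under eq_cvg do rewrite qS.
apply: cvgD; first exact: cvg_cst.
apply: cvgM; first exact: cvg_cst.
by apply: cvg_trans_avg => s1; exact: discounted_cost_cvg.
Qed.

Lemma advantageE s p : \sum_a p a = 1 ->
  advantage P c h gamma pi s p =
  lookahead p (Vfun P c h gamma pi) s - Vfun P c h gamma pi s.
Proof.
move=> p1; rewrite /advantage /lookahead.
set V := Vfun P c h gamma pi; pose EV a := \sum_s1 P s a s1 * V s1.
have -> : \sum_s1 policy_trans p s s1 * V s1 = \sum_a p a * EV a.
  rewrite /policy_trans; under eq_bigr do rewrite mulr_suml.
  rewrite exchange_big; apply: eq_bigr => a _ /=.
  by rewrite mulr_sumr; apply: eq_bigr => s1 _; rewrite mulrA.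
have -> : \sum_a Qfun P c h gamma pi s a * p a =
    \sum_a p a * c s a + h s (pi s) * \sum_a p a + gamma * \sum_a p a * EV a.
  rewrite mulr_sumr mulr_sumr -!big_split; apply: eq_bigr => a _ /=.
  by rewrite Qfun_bellman /EV; ring.
by rewrite p1; ring.
Qed.

Lemma has_ubound_neg_advantage s :
  (forall u, closed_convex_on_simplex (h u)) ->
  has_ubound [set - advantage P c h gamma pi s p | p in @in_simplex R A].
Proof.
move=> h_closed.
have [K hK] := closed_convex_on_simplex_lbound (h_closed s) (pi_feasible s).
exists (\sum_a `|Qfun P c h gamma pi s a| + Vfun P c h gamma pi s - K + h s (pi s)).
move=> _ [p [p0 p1] <-].
have Qp : - \sum_a Qfun P c h gamma pi s a * p a <= \sum_a `|Qfun P c h gamma pi s a|.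
  apply: le_trans (ler_norm _) _; rewrite normrN.
  under eq_bigr do rewrite mulrC.
  exact: norm_convex_comb_le.
have := hK p (conj p0 p1); rewrite /advantage; lra.
Qed.

Lemma neg_advantage_le_adv_gap s p :
  (forall u, closed_convex_on_simplex (h u)) -> in_simplex p ->
  - advantage P c h gamma pi s p <= adv_gap P c h gamma pi s.
Proof.
move=> h_closed p_simplex.
by apply: (ub_le_sup (has_ubound_neg_advantage s h_closed)); exists p.
Qed.

End FixedPolicy.

Section OptimalPolicy.
Variable pistar : S -> A -> R.
Hypothesis pistar_feasible : feasible_policy pistar.
Hypothesis pistar_optimal : forall pi s, feasible_policy pi ->
  Vfun P c h gamma pistar s <= Vfun P c h gamma pi s.

(* Compare pistar with the policy that plays p at s and pistar elsewhere: the
   value gap D of that policy satisfies D = gamma K D + e with e zero off s.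
   If e s < 0 then e <= 0, so the maximum principle and optimality force
   D = 0, whence e s = 0. *)
Lemma optimal_le_lookahead s p : in_simplex p ->
  Vfun P c h gamma pistar s <= lookahead p (Vfun P c h gamma pistar) s.
Proof.
move=> p_simplex.
pose pi u := if u == s then p else pistar u.
have pi_feasible : feasible_policy pi by move=> u; rewrite /pi; case: (u == s).
pose Vstar := Vfun P c h gamma pistar.
pose D u := Vfun P c h gamma pi u - Vstar u.
pose e u := lookahead (pi u) Vstar u - Vstar u.
have D_eq u : D u = gamma * \sum_s' policy_trans (pi u) u s' * D s' + e u.
  by rewrite -lookaheadB /D /e (Vfun_bellman pi_feasible u); ring.
have e_off u : u != s -> e u = 0.
  by rewrite /e /pi => /negbTE ->; rewrite -Vfun_bellman // subrr.
have -> : lookahead p Vstar s = e s + Vstar s by rewrite /e /pi eqxx subrK.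
rewrite lerDr; case: (leP 0 (e s)) => // es_lt0.
have e_le0 u : e u <= 0.
  by case: (eqVneq u s) => [->|/e_off ->]; [exact: ltW|].
have D_le0 u : D u <= 0.
  rewrite -(mulr0 (1 - gamma)^-1).
  apply: (@discounted_max_principle _ _ (fun i => policy_trans (pi i) i)
    _ _ _ _ _ _ gamma_ge0 gamma_lt1 _ e_le0) => [i j|i|i].
  - exact: policy_trans_ge0.
  - exact: policy_trans_sum1.
  - by rewrite -D_eq.
have D0 u : D u = 0.
  by apply/eqP; rewrite eq_le D_le0 subr_ge0 pistar_optimal.
have := D_eq s; rewrite D0 big1 ?mulr0 ?add0r => [es0|s' _]; last by rewrite D0 mulr0.
by move: es_lt0; rewrite -es0 ltxx.
Qed.

End OptimalPolicy.

End MDP.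

Theorem proposition2p2 (R : realType) (S A : finType)
  (P : S -> A -> S -> R) (c : S -> A -> R) (h : S -> (A -> R) -> R)
  (gamma : R) (pistar pi : S -> A -> R) :
  transition_kernel P ->
  0 <= gamma -> gamma < 1 ->
  (forall s, closed_convex_on_simplex (h s)) ->
  feasible_policy pistar ->
  (forall pi' s, feasible_policy pi' ->
     Vfun P c h gamma pistar s <= Vfun P c h gamma pi' s) ->
  feasible_policy pi ->
  forall s : S,
    adv_gap P c h gamma pi s <= Vfun P c h gamma pi s - Vfun P c h gamma pistar s /\
    Vfun P c h gamma pi s - Vfun P c h gamma pistar s
      <= (1 - gamma)^-1 * sup (range (adv_gap P c h gamma pi)).
Proof.
move=> HP gamma_ge0 gamma_lt1 h_closed pistar_feasible pistar_optimal pi_feasible s.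
set V := Vfun P c h gamma pi; set Vstar := Vfun P c h gamma pistar.
split.
  apply: ge_sup; first by exists (- advantage P c h gamma pi s (pi s)), (pi s).
  move=> _ [p p_simplex <-]; rewrite advantageE ?p_simplex.2 // opprB lerD2l lerN2.
  apply: le_trans (optimal_le_lookahead HP gamma_ge0 gamma_lt1 pistar_feasible
    pistar_optimal s p_simplex) _.
  by apply: ler_lookahead => // s'; exact: pistar_optimal.
apply: (@discounted_max_principle _ _ (fun u => policy_trans P (pistar u) u) _ _
  (fun u => V u - Vstar u) (fun u => - advantage P c h gamma pi u (pistar u)))
  => // [u u'|u|u|u].
- exact: policy_trans_ge0.
- exact: policy_trans_sum1.
- have := Vfun_bellman c h HP gamma_ge0 gamma_lt1 pistar_feasible u.
  rewrite advantageE ?(pistar_feasible u).2 // -(lookaheadB P c h) -/V -/Vstar; lra.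
- apply: le_trans (neg_advantage_le_adv_gap _ _ _ pi_feasible u h_closed (pistar_feasible u)) _.
  by apply: (ub_le_sup (has_ubound_range_fin _)); exists u.
Qed.
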